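(* Let $(p_{ij})_{i,j\in\{0,1\}}$ be a transition matrix with all $p_{ij}\in(0,1)$ and $p_{ij}\ne\tfrac12$ for some $(i,j)$; for $i\in\{0,1\}$ let $I_n^i\sim B(n,p_{i0})$. Define for $n\ge2$ $$\eta_n^{i,1}=\frac1H\Big(n\log n-\mathbb E\big[I_n^i\log I_n^i+(n-I_n^i)\log(n-I_n^i)\big]\Big)+\pi_{1-i}\frac{H_{1-i}-H_i}{H}n+\frac{H_1-H_0}{(p_{01}+p_{10})H}p_{i0}p_{i1}^{n-1}n,$$ and $\eta_n^{i,2}=n-\eta_n^{i,1}$. Then for both $i\in\{0,1\}$, $\eta_n^{i,2}=O(\log n)$ as $n\to\infty$.
   Context: $0\log0:=0$. $\pi_0=p_{10}/(p_{01}+p_{10})$, $\pi_1=p_{01}/(p_{01}+p_{10})$, $H_i=-\sum_jp_{ij}\log p_{ij}$, $H=\pi_0H_0+\pi_1H_1$. *)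

(* concrete reals R, natural logarithm (the base cancels in eta). *)
From Stdlib Require Import Reals.
Open Scope R_scope.

Definition xlogx (x : R) : R := if Req_EM_T x 0 then 0 else x * ln x.

(* A 2-state transition matrix p i j, i j in {0,1} (encoded as nat 0,1). *)
Definition pi_ (p : nat -> nat -> R) (i : nat) : R :=
  if Nat.eqb i 0 then p 1%nat 0%nat / (p 0%nat 1%nat + p 1%nat 0%nat)
  else p 0%nat 1%nat / (p 0%nat 1%nat + p 1%nat 0%nat).

Definition Hrow (p : nat -> nat -> R) (i : nat) : R :=
  - (xlogx (p i 0%nat) + xlogx (p i 1%nat)).

Definition Hent (p : nat -> nat -> R) : R :=
  pi_ p 0 * Hrow p 0 + pi_ p 1 * Hrow p 1.

Definition binom_expect (n : nat) (q : R) (f : nat -> R) : R :=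
  sum_f_R0 (fun k => C n k * q ^ k * (1 - q) ^ (n - k) * f k) n.

Definition eta1 (p : nat -> nat -> R) (i n : nat) : R :=
  let H := Hent p in
  (1 / H) * (xlogx (INR n)
     - binom_expect n (p i 0%nat)
         (fun k => xlogx (INR k) + xlogx (INR n - INR k)))
  + pi_ p (1 - i) * (Hrow p (1 - i) - Hrow p i) / H * INR n
  + (Hrow p 1 - Hrow p 0) / ((p 0%nat 1%nat + p 1%nat 0%nat) * H)
      * p i 0%nat * p i 1%nat ^ (n - 1) * INR n.

Definition eta2 (p : nat -> nat -> R) (i n : nat) : R := INR n - eta1 p i n.

From Stdlib Require Import Reals Lra Lia Psatz.
Open Scope R_scope.

(* [eta2] is in fact bounded.  Let [X_n = n log n - E[I log I + (n - I) log (n - I)]]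
   with [I ~ B(n, q)].  Gibbs' inequality [a - c <= a log (a / c) <= a^2 / c - a],
   applied to [I] and [n - I] with [c] their means and averaged using the binomial
   variance [n q (1 - q)], gives [n h(q) - 1 <= X_n <= n h(q)].  Since
   [H = H_i + pi_(1-i) (H_(1-i) - H_i)], the linear terms of [eta1] cancel against [n],
   leaving [(n H_i - X_n) / H] plus a constant multiple of [n q (1 - q)^(n-1) <= 1]. *)

Lemma xlogx_eq x : xlogx x = x * ln x.
Proof. unfold xlogx. destruct (Req_EM_T x 0) as [->|]; [ring|reflexivity]. Qed.

Lemma ln_le_sub1 x : 0 < x -> ln x <= x - 1.
Proof. intros Hx. pose proof (exp_ineq1_le (ln x)). rewrite exp_ln in H; lra. Qed.

Lemma xlogx_gibbs_bounds a c : 0 <= a -> 0 < c ->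
  a * ln c + (a - c) <= xlogx a <= a * ln c + (a ^ 2 / c - a).
Proof.
intros Ha Hc. rewrite xlogx_eq.
destruct (Req_dec a 0) as [->|Ha0].
{ unfold Rdiv. split; ring_simplify; lra. }
assert (Hup := ln_le_sub1 (a / c) ltac:(apply Rdiv_lt_0_compat; lra)).
assert (Hlo := ln_le_sub1 (c / a) ltac:(apply Rdiv_lt_0_compat; lra)).
unfold Rdiv in Hup, Hlo |- *.
rewrite ln_mult, ln_Rinv in Hup, Hlo by (try apply Rinv_0_lt_compat; lra).
split.
- assert (a * (ln c + - ln a) <= a * (c * / a - 1)) by (apply Rmult_le_compat_l; lra).
  replace (a * (c * / a - 1)) with (c - a) in H by (field; lra). nra.
- assert (a * (ln a + - ln c) <= a * (a * / c - 1)) by (apply Rmult_le_compat_l; lra).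
  replace (a * (a * / c - 1)) with (a ^ 2 * / c - a) in H by (field; lra). nra.
Qed.

Lemma binom_expect_ext n q f g : (forall k, (k <= n)%nat -> f k = g k) ->
  binom_expect n q f = binom_expect n q g.
Proof. intros H. unfold binom_expect. apply sum_eq. intros k Hk. rewrite H; auto. Qed.

Lemma binom_expect_plus n q f g :
  binom_expect n q (fun k => f k + g k) = binom_expect n q f + binom_expect n q g.
Proof. unfold binom_expect. rewrite <- sum_plus. apply sum_eq. intros; ring. Qed.

Lemma binom_expect_scal n q a f :
  binom_expect n q (fun k => a * f k) = a * binom_expect n q f.
Proof. unfold binom_expect. rewrite scal_sum. apply sum_eq. intros; ring. Qed.

Lemma binom_expect_const n q c : binom_expect n q (fun _ => c) = c.
Proof.
unfold binom_expect. transitivity ((q + (1 - q)) ^ n * c).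
- rewrite binomial, Rmult_comm, scal_sum. apply sum_eq. intros; ring.
- replace (q + (1 - q)) with 1 by ring. rewrite pow1. ring.
Qed.

Lemma binom_expect_le n q f g : 0 <= q <= 1 ->
  (forall k, (k <= n)%nat -> f k <= g k) -> binom_expect n q f <= binom_expect n q g.
Proof.
intros Hq H. unfold binom_expect. apply sum_Rle. intros k Hk.
apply Rmult_le_compat_l; auto.
assert (0 < C n k).
{ unfold C. apply Rdiv_lt_0_compat; [|apply Rmult_lt_0_compat];
  apply lt_0_INR, Factorial.lt_O_fact. }
assert (0 <= q ^ k) by (apply pow_le; lra).
assert (0 <= (1 - q) ^ (n - k)) by (apply pow_le; lra).
apply Rmult_le_pos; [apply Rmult_le_pos|]; lra.
Qed.

Lemma INR_mul_C_succ m i : (i <= m)%nat ->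
  INR (S i) * C (S m) (S i) = INR (S m) * C m i.
Proof.
intros Hi. unfold C. replace (S m - S i)%nat with (m - i)%nat by lia.
change (Factorial.fact (S m)) with (S m * Factorial.fact m)%nat.
change (Factorial.fact (S i)) with (S i * Factorial.fact i)%nat.
rewrite !mult_INR.
pose proof (INR_fact_neq_0 i). pose proof (INR_fact_neq_0 (m - i)).
pose proof (lt_0_INR (S i) ltac:(lia)).
field. lra.
Qed.

Lemma binom_expect_INR_mul m q g :
  binom_expect (S m) q (fun k => INR k * g k)
  = INR (S m) * q * binom_expect m q (fun j => g (S j)).
Proof.
unfold binom_expect. rewrite decomp_sum by lia. simpl pred.
rewrite Rmult_assoc, scal_sum. simpl INR at 1.
rewrite !Rmult_0_l, !Rmult_0_r, Rplus_0_l.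
apply sum_eq. intros i Hi.
replace (S m - S i)%nat with (m - i)%nat by lia.
transitivity (INR (S i) * C (S m) (S i) * q * q ^ i * (1 - q) ^ (m - i) * g (S i));
  [simpl; ring|].
rewrite INR_mul_C_succ by exact Hi. ring.
Qed.

Lemma binom_expect_INR n q : binom_expect n q (fun k => INR k) = INR n * q.
Proof.
destruct n as [|m]; [unfold binom_expect; simpl; ring|].
rewrite (binom_expect_ext _ _ _ (fun k => INR k * 1)) by (intros; ring).
rewrite binom_expect_INR_mul, binom_expect_const. ring.
Qed.

Lemma binom_expect_INR_sqr n q :
  binom_expect n q (fun k => INR k ^ 2) = (INR n * q) ^ 2 + INR n * q * (1 - q).
Proof.
destruct n as [|m]; [unfold binom_expect; simpl; ring|].
rewrite (binom_expect_ext _ _ _ (fun k => INR k * INR k)) by (intros; ring).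
rewrite binom_expect_INR_mul.
rewrite (binom_expect_ext _ _ _ (fun j => INR j + 1)) by (intros; rewrite S_INR; ring).
rewrite binom_expect_plus, binom_expect_INR, binom_expect_const, S_INR. ring.
Qed.

Lemma binom_expect_sub_INR n q :
  binom_expect n q (fun k => INR n - INR k) = INR n * (1 - q).
Proof.
rewrite (binom_expect_ext _ _ _ (fun k => INR n + -1 * INR k)) by (intros; ring).
rewrite binom_expect_plus, binom_expect_scal, binom_expect_INR, binom_expect_const. ring.
Qed.

Lemma binom_expect_sub_INR_sqr n q :
  binom_expect n q (fun k => (INR n - INR k) ^ 2)
  = (INR n * (1 - q)) ^ 2 + INR n * q * (1 - q).
Proof.
rewrite (binom_expect_ext _ _ _
  (fun k => INR n ^ 2 + (-2 * INR n * INR k + INR k ^ 2))) by (intros; ring).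
rewrite !binom_expect_plus, binom_expect_scal, binom_expect_INR, binom_expect_INR_sqr,
  binom_expect_const. ring.
Qed.

Lemma binom_expect_xlogx_bounds n q (Y : nat -> R) m v :
  0 <= q <= 1 -> 0 < m -> (forall k, (k <= n)%nat -> 0 <= Y k) ->
  binom_expect n q Y = m -> binom_expect n q (fun k => Y k ^ 2) = m ^ 2 + v ->
  xlogx m <= binom_expect n q (fun k => xlogx (Y k)) <= xlogx m + v / m.
Proof.
intros Hq Hm HY HY1 HY2.
assert (Hlin : forall a b c,
  binom_expect n q (fun k => a * Y k + b * Y k ^ 2 + c) = a * m + b * (m ^ 2 + v) + c).
{ intros a b c.
  rewrite !binom_expect_plus, !binom_expect_scal, binom_expect_const, HY1, HY2. ring. }
rewrite xlogx_eq. split.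
- replace (m * ln m) with ((ln m + 1) * m + 0 * (m ^ 2 + v) + - m) by ring.
  rewrite <- Hlin. apply binom_expect_le; [exact Hq|]. intros k Hk.
  pose proof (xlogx_gibbs_bounds (Y k) m (HY k Hk) Hm). lra.
- replace (m * ln m + v / m) with ((ln m - 1) * m + / m * (m ^ 2 + v) + 0)
    by (field; lra).
  rewrite <- Hlin. apply binom_expect_le; [exact Hq|]. intros k Hk.
  pose proof (xlogx_gibbs_bounds (Y k) m (HY k Hk) Hm). unfold Rdiv in H. lra.
Qed.

Definition binary_entropy (q : R) : R := - (xlogx q + xlogx (1 - q)).

Lemma binary_entropy_pos q : 0 < q < 1 -> 0 < binary_entropy q.
Proof.
intros Hq. unfold binary_entropy. rewrite !xlogx_eq.
assert (ln q < 0) by (rewrite <- ln_1; apply ln_increasing; lra).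
assert (ln (1 - q) < 0) by (rewrite <- ln_1; apply ln_increasing; lra).
nra.
Qed.

Lemma xlogx_mul_split x q : 0 < x -> 0 < q < 1 ->
  xlogx x = xlogx (x * q) + xlogx (x * (1 - q)) + x * binary_entropy q.
Proof.
intros Hx Hq. unfold binary_entropy. rewrite !xlogx_eq, !ln_mult by lra. ring.
Qed.

Lemma binom_entropy_bounds n q : (0 < n)%nat -> 0 < q < 1 ->
  let X := xlogx (INR n)
           - binom_expect n q (fun k => xlogx (INR k) + xlogx (INR n - INR k)) in
  INR n * binary_entropy q - 1 <= X <= INR n * binary_entropy q.
Proof.
intros Hn Hq X.
assert (Hn' : 0 < INR n) by (apply lt_0_INR; exact Hn).
assert (Hk : forall k, (k <= n)%nat -> 0 <= INR k <= INR n)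
  by (intros k Hk; split; [apply pos_INR | apply le_INR; exact Hk]).
assert (Hsucc := binom_expect_xlogx_bounds n q (fun k => INR k) (INR n * q)
  (INR n * q * (1 - q)) ltac:(lra) ltac:(nra) ltac:(intros k Hk'; apply Hk, Hk')
  (binom_expect_INR n q) ltac:(apply binom_expect_INR_sqr)).
assert (Hfail := binom_expect_xlogx_bounds n q (fun k => INR n - INR k) (INR n * (1 - q))
  (INR n * q * (1 - q)) ltac:(lra) ltac:(nra)
  ltac:(intros k Hk'; pose proof (Hk k Hk'); lra)
  (binom_expect_sub_INR n q) ltac:(apply binom_expect_sub_INR_sqr)).
replace (INR n * q * (1 - q) / (INR n * q)) with (1 - q) in Hsucc by (field; lra).
replace (INR n * q * (1 - q) / (INR n * (1 - q))) with q in Hfail by (field; lra).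
unfold X. rewrite binom_expect_plus, (xlogx_mul_split (INR n) q Hn' Hq). lra.
Qed.

Lemma INR_mul_pow_pred_le n r : 0 <= r < 1 -> INR n * r ^ (n - 1) * (1 - r) <= 1.
Proof.
intros Hr. destruct n as [|m]; [simpl; lra|].
replace (S m - 1)%nat with m by lia.
induction m as [|m IH]; [simpl; lra|].
assert (Hpow : r ^ S m <= 1) by (rewrite <- (pow1 (S m)); apply pow_incr; lra).
assert (r * (INR (S m) * r ^ m * (1 - r)) <= r) by nra.
rewrite S_INR. simpl pow in *. nra.
Qed.

Lemma bounded_le_mul_ln (u : nat -> R) B :
  (forall n, (1 <= n)%nat -> Rabs (u n) <= B) ->
  exists K N, forall n, (N <= n)%nat -> Rabs (u n) <= K * ln (INR n).
Proof.
intros Hu.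
assert (Hln2 : 0 < ln 2) by (rewrite <- ln_1; apply ln_increasing; lra).
assert (HB : 0 <= B) by (eapply Rle_trans; [apply Rabs_pos | apply (Hu 1%nat); lia]).
exists (B / ln 2), 2%nat. intros n Hn.
assert (Hlnn : ln 2 <= ln (INR n)).
{ replace 2 with (INR 2) by (simpl; ring).
  destruct (Nat.eq_dec n 2) as [->|Hne]; [lra|].
  left. apply ln_increasing; [simpl; lra | apply lt_INR; lia]. }
apply Rle_trans with (B / ln 2 * ln 2).
- replace (B / ln 2 * ln 2) with B by (field; lra). apply Hu. lia.
- apply Rmult_le_compat_l; [unfold Rdiv; apply Rmult_le_pos; [|left; apply Rinv_0_lt_compat]|]; lra.
Qed.

Section TwoStateChain.

Variable p : nat -> nat -> R.
Hypothesis hp : forall i j, (i <= 1)%nat -> (j <= 1)%nat -> 0 < p i j < 1.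
Hypothesis hrow : forall i, (i <= 1)%nat -> p i 0%nat + p i 1%nat = 1.

Lemma Hrow_binary_entropy i : (i <= 1)%nat -> Hrow p i = binary_entropy (p i 0%nat).
Proof.
intros Hi. unfold Hrow, binary_entropy.
replace (1 - p i 0%nat) with (p i 1%nat) by (pose proof (hrow i Hi); lra). reflexivity.
Qed.

Lemma Hrow_pos i : (i <= 1)%nat -> 0 < Hrow p i.
Proof. intros Hi. rewrite Hrow_binary_entropy by exact Hi. apply binary_entropy_pos, hp; lia. Qed.

Lemma Hent_pos : 0 < Hent p.
Proof.
pose proof (Hrow_pos 0 ltac:(lia)). pose proof (Hrow_pos 1 ltac:(lia)).
pose proof (hp 0 1 ltac:(lia) ltac:(lia)). pose proof (hp 1 0 ltac:(lia) ltac:(lia)).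
unfold Hent, pi_. simpl.
assert (0 < p 1%nat 0%nat / (p 0%nat 1%nat + p 1%nat 0%nat)) by (apply Rdiv_lt_0_compat; lra).
assert (0 < p 0%nat 1%nat / (p 0%nat 1%nat + p 1%nat 0%nat)) by (apply Rdiv_lt_0_compat; lra).
nra.
Qed.

Lemma Hent_eq_Hrow_add i : (i <= 1)%nat ->
  Hent p = Hrow p i + pi_ p (1 - i) * (Hrow p (1 - i) - Hrow p i).
Proof.
intros Hi.
pose proof (hp 0 1 ltac:(lia) ltac:(lia)). pose proof (hp 1 0 ltac:(lia) ltac:(lia)).
unfold Hent, pi_. destruct i as [|[|]]; [| | lia]; simpl; field; lra.
Qed.

Lemma eta2_eq i n : (i <= 1)%nat ->
  eta2 p i n =
    (INR n * Hrow p i - (xlogx (INR n)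
       - binom_expect n (p i 0%nat) (fun k => xlogx (INR k) + xlogx (INR n - INR k))))
      / Hent p
    - (Hrow p 1 - Hrow p 0) / ((p 0%nat 1%nat + p 1%nat 0%nat) * Hent p)
      * (INR n * p i 1%nat ^ (n - 1) * p i 0%nat).
Proof.
intros Hi.
pose proof Hent_pos. pose proof (Hent_eq_Hrow_add i Hi).
pose proof (hp 0 1 ltac:(lia) ltac:(lia)). pose proof (hp 1 0 ltac:(lia) ltac:(lia)).
unfold eta2, eta1.
set (D := pi_ p (1 - i) * (Hrow p (1 - i) - Hrow p i)) in *.
replace (Hrow p i) with (Hent p - D) by lra.
field. lra.
Qed.

Lemma eta2_bounded i : (i <= 1)%nat ->
  exists B, forall n, (1 <= n)%nat -> Rabs (eta2 p i n) <= B.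
Proof.
intros Hi.
set (c := (Hrow p 1 - Hrow p 0) / ((p 0%nat 1%nat + p 1%nat 0%nat) * Hent p)).
exists (1 / Hent p + Rabs c). intros n Hn.
assert (HH := Hent_pos).
assert (Hq : 0 < p i 0%nat < 1) by (apply hp; lia).
assert (Hr : p i 1%nat = 1 - p i 0%nat) by (pose proof (hrow i Hi); lra).
rewrite eta2_eq, Hrow_binary_entropy by exact Hi. fold c.
destruct (binom_entropy_bounds n (p i 0%nat) Hn Hq) as [Xlo Xhi].
set (X := xlogx (INR n) - _) in *.
assert (Hgeom := INR_mul_pow_pred_le n (p i 1%nat) ltac:(lra)).
rewrite Hr in Hgeom |- *.
assert (0 <= INR n * (1 - p i 0%nat) ^ (n - 1))
  by (apply Rmult_le_pos; [apply pos_INR | apply pow_le; lra]).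
set (g := INR n * (1 - p i 0%nat) ^ (n - 1) * p i 0%nat) in *.
assert (Hg : 0 <= g <= 1) by (unfold g; split; [nra | lra]).
assert (Ha : 0 <= (INR n * binary_entropy (p i 0%nat) - X) / Hent p <= 1 / Hent p).
{ unfold Rdiv. split.
  - apply Rmult_le_pos; [lra | left; apply Rinv_0_lt_compat; lra].
  - apply Rmult_le_compat_r; [left; apply Rinv_0_lt_compat |]; lra. }
pose proof (Rle_abs c). pose proof (Rabs_pos c).
assert (- c <= Rabs c) by (rewrite <- Rabs_Ropp; apply Rle_abs).
apply Rabs_le. split; nra.
Qed.

End TwoStateChain.

Theorem lemma6p5 (p : nat -> nat -> R)
  (hp : forall i j, (i <= 1)%nat -> (j <= 1)%nat -> 0 < p i j < 1)
  (hrow : forall i, (i <= 1)%nat -> p i 0%nat + p i 1%nat = 1)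
  (hnh : exists i j, (i <= 1)%nat /\ (j <= 1)%nat /\ p i j <> 1 / 2) :
  forall i, (i <= 1)%nat ->
    exists (K : R) (N : nat), forall n, (N <= n)%nat ->
      Rabs (eta2 p i n) <= K * ln (INR n).
Proof.
intros i Hi.
destruct (eta2_bounded p hp hrow i Hi) as [B HB].
exact (bounded_le_mul_ln _ B HB).
Qed.
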